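(* Let $P(q)=\sum_{j=0}^{n} q^{j}a_{j}$ be a slice regular polynomial of degree $n$ with quaternionic coefficients, and let $P'(q)=\sum_{j=1}^n q^{j-1}ja_j$. Then $$\|P'\|_{2}\leq n\|P\|_{2},$$ where for a slice regular function $f$ on the unit ball $\mathbb B$, $$\|f\|_{2}:=\sup_{I\in\mathbb S}\lim_{r\to1^{-}}\Big(\int_{0}^{2\pi}|f_{I}(re^{I\theta})|^{2}\,d\theta\Big)^{1/2}.$$ Moreover, equality holds if and only if $P(q)=q^{n}a_{n}$ for some $a_{n}\in\mathbb H$.
   Context: $\mathbb H$ denotes the quaternions with modulus $|q|=\sqrt{q\bar q}$; $\mathbb B=\{q\in\mathbb H:|q|<1\}$; $\mathbb S=\{q\in\mathbb H: q^2=-1\}$ is the sphere of imaginary units; for $I\in\mathbb S$, $\mathbb C_I=\mathbb R\oplus I\mathbb R$ and $f_I$ denotes the restriction of $f$ to $\mathbb B\cap\mathbb C_I$. A slice regular polynomial of degree $n$ is a function $q\mapsto\sum_{j=0}^n q^ja_j$, $a_j\in\mathbb H$, $a_n\neq0$. *)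

From HB Require Import structures.
From mathcomp Require Import all_boot all_order all_algebra.
From mathcomp Require Import all_classical all_reals all_analysis.
From mathcomp Require Import ring.
Set Implicit Arguments. Unset Strict Implicit. Unset Printing Implicit Defensive.
Import Order.TTheory GRing.Theory Num.Theory.
Import numFieldNormedType.Exports.
Local Open Scope classical_set_scope.
Local Open Scope ring_scope.

Record quat (R : realType) := Quat { q0 : R; q1 : R; q2 : R; q3 : R }.

Section Quaternions.
Variable R : realType.

Definition quat_to (q : quat R) := (q0 q, q1 q, q2 q, q3 q).
Definition quat_of (x : R * R * R * R) := let: (a, b, c, d) := x in Quat a b c d.
Lemma quat_toK : cancel quat_to quat_of. Proof. by case. Qed.

HB.instance Definition _ := Equality.copy (quat R) (can_type quat_toK).
HB.instance Definition _ := Choice.copy (quat R) (can_type quat_toK).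

Definition qzero : quat R := Quat 0 0 0 0.
Definition qone : quat R := Quat 1 0 0 0.
Definition qadd (p q : quat R) :=
  Quat (q0 p + q0 q) (q1 p + q1 q) (q2 p + q2 q) (q3 p + q3 q).
Definition qopp (p : quat R) := Quat (- q0 p) (- q1 p) (- q2 p) (- q3 p).
(* Hamilton product, i^2 = j^2 = k^2 = ijk = -1 *)
Definition qmul (p q : quat R) :=
  Quat (q0 p * q0 q - q1 p * q1 q - q2 p * q2 q - q3 p * q3 q)
       (q0 p * q1 q + q1 p * q0 q + q2 p * q3 q - q3 p * q2 q)
       (q0 p * q2 q - q1 p * q3 q + q2 p * q0 q + q3 p * q1 q)
       (q0 p * q3 q + q1 p * q2 q - q2 p * q1 q + q3 p * q0 q).

Lemma qaddA : associative qadd.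
Proof. by case=> ? ? ? ?; case=> ? ? ? ?; case=> ? ? ? ?; rewrite /qadd /= !addrA. Qed.
Lemma qaddC : commutative qadd.
Proof. by case=> ? ? ? ?; case=> ? ? ? ?; rewrite /qadd /= [X in Quat X _ _ _]addrC
  [X in Quat _ X _ _]addrC [X in Quat _ _ X _]addrC [X in Quat _ _ _ X]addrC. Qed.
Lemma qadd0 : left_id qzero qadd.
Proof. by case=> ? ? ? ?; rewrite /qadd /= !add0r. Qed.
Lemma qaddN : left_inverse qzero qopp qadd.
Proof. by case=> ? ? ? ?; rewrite /qadd /= !addNr. Qed.

HB.instance Definition _ := GRing.isZmodule.Build (quat R) qaddA qaddC qadd0 qaddN.

Lemma qmulA : associative qmul.
Proof. by case=> ? ? ? ?; case=> ? ? ? ?; case=> ? ? ? ?; rewrite /qmul /=; congr Quat; ring. Qed.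
Lemma qmul1 : left_id qone qmul.
Proof. by case=> ? ? ? ?; rewrite /qmul /=; congr Quat; ring. Qed.
Lemma qmulr1 : right_id qone qmul.
Proof. by case=> ? ? ? ?; rewrite /qmul /=; congr Quat; ring. Qed.
Lemma qmulDl : left_distributive qmul qadd.
Proof. by case=> ? ? ? ?; case=> ? ? ? ?; case=> ? ? ? ?; rewrite /qmul /= /qadd /=; congr Quat; ring. Qed.
Lemma qmulDr : right_distributive qmul qadd.
Proof. by case=> ? ? ? ?; case=> ? ? ? ?; case=> ? ? ? ?; rewrite /qmul /= /qadd /=; congr Quat; ring. Qed.
Lemma qone_neq0 : qone != 0.
Proof. by apply/eqP => -[] /eqP; rewrite oner_eq0. Qed.

HB.instance Definition _ := GRing.Zmodule_isNzRing.Build (quat R)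
  qmulA qmul1 qmulr1 qmulDl qmulDr qone_neq0.

Definition qreal (x : R) : quat R := Quat x 0 0 0.

Definition qnorm (q : quat R) : R :=
  Num.sqrt (q0 q ^+ 2 + q1 q ^+ 2 + q2 q ^+ 2 + q3 q ^+ 2).

Definition imag_units : set (quat R) := [set I | I * I = -1].

Definition rexpI (I : quat R) (r theta : R) : quat R :=
  qreal (r * cos theta) + I * qreal (r * sin theta).

Definition H2_slice (f : quat R -> quat R) (I : quat R) : R :=
  lim ((fun r : R => Num.sqrt (\int[lebesgue_measure]_(theta in `[0, 2 * pi]%classic)
          (qnorm (f (rexpI I r theta)) ^+ 2))) @ (1:R)^'-).

Definition H2norm (f : quat R -> quat R) : R :=
  sup [set x | exists2 I, imag_units I & x = H2_slice f I].

Definition spoly (n : nat) (a : nat -> quat R) (q : quat R) : quat R :=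
  \sum_(j < n.+1) q ^+ j * a j.

Definition spoly_deriv (n : nat) (a : nat -> quat R) (q : quat R) : quat R :=
  \sum_(1 <= j < n.+1) q ^+ j.-1 * (j%:R * a j).

End Quaternions.

(* On the slice C_I, left multiplication by the imaginary unit I is an isometry
   of H that is skew for the Euclidean inner product, so
   <e^{Is} x, e^{Iu} z> = cos (s - u) <x, z> + sin (s - u) <I x, z>
   and the functions t |-> e^{Ijt} x are orthogonal on [0, 2 pi].  This gives
   Parseval's identity ||sum_j q^j b_j||_2^2 = 2 pi sum_j |b_j|^2 on every slice,
   hence ||P'||_2^2 = 2 pi sum_j j^2 |a_j|^2 <= n^2 ||P||_2^2, with equality exactly
   when a_j = 0 for j < n.  Parseval also shows that a slice polynomial vanishing
   identically has zero coefficients, which identifies the monomials q^n c. *)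

From HB Require Import structures.
From mathcomp Require Import all_boot all_order all_algebra.
From mathcomp Require Import all_classical all_reals all_analysis.
From mathcomp Require Import ring lra.
Import Order.TTheory GRing.Theory Num.Theory.
Import numFieldNormedType.Exports.
Local Open Scope classical_set_scope.
Local Open Scope ring_scope.

Section WeightedSums.
Context {R : numDomainType} {I : finType}.
Variables (w s : I -> R) (W : R).
Hypotheses (s_ge0 : forall i, 0 <= s i) (w_le : forall i, w i <= W).

Let gap_sum : W * \sum_i s i - \sum_i w i * s i = \sum_i (W - w i) * s i.
Proof. by rewrite mulr_sumr -sumrB; apply: eq_bigr => i _; rewrite mulrBl. Qed.

Let gap_ge0 i : 0 <= (W - w i) * s i.
Proof. by rewrite mulr_ge0 ?subr_ge0. Qed.

Lemma ler_wsum_bound : \sum_i w i * s i <= W * \sum_i s i.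
Proof. by rewrite -subr_ge0 gap_sum sumr_ge0. Qed.

Lemma eq_wsum_boundP : \sum_i w i * s i = W * \sum_i s i <-> (forall i, w i < W -> s i = 0).
Proof.
rewrite (rwP eqP) eq_sym -subr_eq0 gap_sum -(rwP eqP); split=> [gap0 i wW | s0].
  have /eqP := psumr_eq0P (fun i _ => gap_ge0 i) gap0 (i := i) isT.
  by rewrite mulf_eq0 subr_eq0 gt_eqF //= => /eqP.
apply: big1 => i _; have := w_le i; rewrite le_eqVlt => /orP[/eqP-> | /s0->].
  by rewrite subrr mul0r.
by rewrite mulr0.
Qed.

End WeightedSums.

Section TrigonometricIntegrals.
Context {R : realType}.
Notation mu := (@lebesgue_measure R).
Implicit Types (f g F : R -> R) (m x : R).

Lemma continuousD_fun f g : continuous f -> continuous g -> continuous (fun x => f x + g x).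
Proof. by move=> cf cg x; exact: (continuousD (cf x) (cg x)). Qed.

Lemma continuousM_fun f g : continuous f -> continuous g -> continuous (fun x => f x * g x).
Proof. by move=> cf cg x; exact: (continuousM (cf x) (cg x)). Qed.

Lemma continuous_comp_scale f m : continuous f -> continuous (fun x => f (m * x)).
Proof. by move=> cf x; apply: continuous_comp; [exact: mulrl_continuous | exact: cf]. Qed.

Lemma continuous_trig m (A B : R) :
  continuous (fun t => cos (m * t) * A + sin (m * t) * B).
Proof.
apply: continuousD_fun; apply: continuousM_fun; try exact: cst_continuous.
- exact/continuous_comp_scale/continuous_cos.
- exact/continuous_comp_scale/continuous_sin.
Qed.

Lemma is_derive_comp_scale {g} m {x dg} :
  is_derive (m * x) 1 g dg -> is_derive x 1 (fun y => g (m * y)) (m * dg).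
Proof.
move=> [dg1 dg2].
have dm : is_derive x 1 ( *%R m) m by rewrite -[X in is_derive _ _ _ X]mulr1; exact: is_deriveZ.
have dmx : derivable ( *%R m) x 1 by case: dm.
have dgm : derivable (g \o *%R m) x 1.
  by apply/derivable1_diffP/differentiable_comp; apply/derivable1_diffP.
apply: DeriveDef => //.
by rewrite -derive1E derive1_comp // derive1E dg2 derive1E; case: dm => _ ->; rewrite mulrC.
Qed.

Lemma Rintegral_is_derive {F f a b} : a < b -> continuous f ->
  (forall x, is_derive x 1 F (f x)) ->
  \int[mu]_(x in `[a, b]) f x = F b - F a.
Proof.
move=> ab cf dF.
have dFx x : derivable F x 1 by case: (dF x).
have cF : continuous F by move=> x; apply/differentiable_continuous/derivable1_diffP.
rewrite /Rintegral (@continuous_FTC2 R f F a b ab) //.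
- exact: continuous_subspaceT.
- by split; [move=> x _ | exact: cvg_at_right_filter (cF a) | exact: cvg_at_left_filter (cF b)].
- by move=> x _; rewrite derive1E; case: (dF x).
Qed.

Lemma cos_sin_intr2pi (m : int) :
  cos (m%:~R * (2 * pi)) = 1 :> R /\ sin (m%:~R * (2 * pi)) = 0 :> R.
Proof.
have nat2pi (k : nat) : cos (k%:R * (2 * pi)) = 1 :> R /\ sin (k%:R * (2 * pi)) = 0 :> R.
  rewrite !mulr_natl -[_ *+ 2 *+ k]add0r.
  by rewrite (periodicn (@cosD2pi R)) (periodicn (@sinD2pi R)) cos0 sin0.
case: m => k; first exact: nat2pi.
by rewrite NegzE mulrNz mulNr cosN sinN (nat2pi k.+1).1 (nat2pi k.+1).2 oppr0.
Qed.

Lemma twopi_gt0 : 0 < 2 * pi :> R.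
Proof. by rewrite mulr_gt0 ?pi_gt0. Qed.

Lemma Rintegral_trig (m : int) (A B : R) :
  \int[mu]_(t in `[0, 2 * pi]) (cos (m%:~R * t) * A + sin (m%:~R * t) * B) =
  (m == 0)%:R * A * (2 * pi).
Proof.
have [->|m0] := eqVneq m 0.
  under eq_Rintegral do rewrite mul0r cos0 sin0 mul1r mul0r addr0.
  rewrite Rintegral_cst //.
  have := @lebesgue_measure_itv R `[0, 2 * pi]%R.
  by rewrite /= lte_fin twopi_gt0 => ->; rewrite /= subr0 mul1r.
have mR : m%:~R != 0 :> R by rewrite intr_eq0.
pose F t := m%:~R^-1 * (A * sin (m%:~R * t) - B * cos (m%:~R * t)).
have dF x : is_derive x 1 F (cos (m%:~R * x) * A + sin (m%:~R * x) * B).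
  have ds := is_derive_comp_scale m%:~R (is_derive_sin (m%:~R * x)).
  have dc := is_derive_comp_scale m%:~R (is_derive_cos (m%:~R * x)).
  apply: is_derive_eq (is_deriveZ m%:~R^-1 (is_deriveB (is_deriveZ A ds) (is_deriveZ B dc))) _.
  by rewrite /GRing.scale /=; field.
rewrite mul0r mul0r (Rintegral_is_derive twopi_gt0 (continuous_trig _ _ _) dF) /F.
have [-> ->] := cos_sin_intr2pi m.
by rewrite !mulr0 cos0 sin0; field.
Qed.

Lemma continuous_sum (I : Type) (s : seq I) (P : pred I) (F : I -> R -> R) :
  (forall i, continuous (F i)) -> continuous (fun x => \sum_(i <- s | P i) F i x).
Proof. by move=> cF; apply: continuous_big => [|i _]; [exact: add_continuous | exact: cF]. Qed.

Lemma Rintegral_sum (I : Type) (s : seq I) (P : pred I) (F : I -> R -> R) a b :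
  (forall i, continuous (F i)) ->
  \int[mu]_(x in `[a, b]) (\sum_(i <- s | P i) F i x) =
  \sum_(i <- s | P i) \int[mu]_(x in `[a, b]) F i x.
Proof.
move=> cF; have intab f : continuous f -> mu.-integrable `[a, b] (EFin \o f).
  move=> cf; apply: continuous_compact_integrable; first exact: segment_compact.
  exact: continuous_subspaceT.
elim: s => [|i s IHs].
  by under eq_Rintegral do rewrite big_nil; rewrite big_nil Rintegral_cst // mul0r.
under eq_Rintegral do rewrite big_cons.
rewrite big_cons -IHs; case: (P i) => //.
by rewrite RintegralD //; apply: intab; [exact: cF | exact: continuous_sum].
Qed.

End TrigonometricIntegrals.

Section QuaternionGeometry.
Context {R : realType}.
Implicit Types (p q x y z I : quat R) (c r s u : R).

Definition qdot p q := q0 p * q0 q + q1 p * q1 q + q2 p * q2 q + q3 p * q3 q.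

Lemma qaddE p q : p + q = Quat (q0 p + q0 q) (q1 p + q1 q) (q2 p + q2 q) (q3 p + q3 q).
Proof. by []. Qed.

Lemma qmulE p q : p * q = qmul p q.
Proof. by []. Qed.

Lemma qrealC c q : qreal c * q = q * qreal c.
Proof. by case: q => *; rewrite !qmulE /qmul /=; congr Quat; ring. Qed.

Lemma qrealD : {morph @qreal R : c s / c + s}.
Proof. by move=> c s; rewrite qaddE /= addr0. Qed.

Lemma qreal_nat (k : nat) : k%:R = qreal k%:R :> quat R.
Proof. by elim: k => [|k IHk] //; rewrite -!natr1 IHk qrealD. Qed.

Lemma qdotDl x y z : qdot (x + y) z = qdot x z + qdot y z.
Proof. by rewrite /qdot qaddE /=; ring. Qed.

Lemma qdotDr x y z : qdot x (y + z) = qdot x y + qdot x z.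
Proof. by rewrite /qdot qaddE /=; ring. Qed.

Lemma qdotZl c x z : qdot (qreal c * x) z = c * qdot x z.
Proof. by rewrite /qdot qmulE /qmul /=; ring. Qed.

Lemma qdotZr c x z : qdot x (qreal c * z) = c * qdot x z.
Proof. by rewrite /qdot qmulE /qmul /=; ring. Qed.

Lemma qdot_sum (J K : Type) (sJ : seq J) (sK : seq K) (X : J -> quat R) (Y : K -> quat R) :
  qdot (\sum_(j <- sJ) X j) (\sum_(k <- sK) Y k) = \sum_(j <- sJ) \sum_(k <- sK) qdot (X j) (Y k).
Proof.
have qdot0l y : qdot 0 y = 0 by rewrite /qdot /=; ring.
have qdot0r y : qdot y 0 = 0 by rewrite /qdot /=; ring.
rewrite (big_morph (qdot^~ _) (fun x y => qdotDl x y _) (qdot0l _)).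
by apply: eq_bigr => j _; rewrite (big_morph (qdot _) (qdotDr _) (qdot0r _)).
Qed.

Lemma qnorm_sqr q : qnorm q ^+ 2 = qdot q q.
Proof. by rewrite sqr_sqrtr // !addr_ge0 ?sqr_ge0. Qed.

Lemma qdot_ge0 q : 0 <= qdot q q.
Proof. by rewrite -qnorm_sqr sqr_ge0. Qed.

Lemma qdot_eq0 q : (qdot q q == 0) = (q == 0).
Proof.
apply/eqP/eqP => [|->]; last by rewrite /qdot /=; ring.
case: q => a b c d; rewrite /qdot /= => q0.
by have [-> -> -> ->] : [/\ a = 0, b = 0, c = 0 & d = 0] by split; nra.
Qed.

Lemma imag_unitP I : I * I = -1 -> q0 I = 0 /\ q1 I ^+ 2 + q2 I ^+ 2 + q3 I ^+ 2 = 1.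
Proof.
case: I => a b c d; rewrite qmulE /qmul /= => -[e0 e1 e2 e3] /=.
have a0 : a = 0 by nra.
by split=> //; move: e0; rewrite a0 => e0; nra.
Qed.

Lemma qdot_imag_skew I x z : I * I = -1 -> qdot x (I * z) = - qdot (I * x) z.
Proof.
case/imag_unitP; case: I => a b c d /= -> _.
by rewrite /qdot !qmulE /qmul /=; ring.
Qed.

Lemma qdot_imag_isometry I x z : I * I = -1 -> qdot (I * x) (I * z) = qdot x z.
Proof.
case/imag_unitP; case: I => a b c d /= -> unit.
rewrite /qdot !qmulE /qmul /= -[RHS]mul1r -unit; ring.
Qed.

Lemma rexpIM I r s u c : I * I = -1 ->
  rexpI I r s * rexpI I u c = rexpI I (r * u) (s + c).
Proof.
move=> hI; have expand a b d e : (qreal a + I * qreal b) * (qreal d + I * qreal e) =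
    qreal (a * d) + I * qreal (a * e + b * d) + I * I * qreal (b * e).
  by rewrite !qmulE !qaddE /qmul /=; congr Quat; ring.
rewrite /rexpI expand hI cosD sinD !qmulE !qaddE /qmul /=; congr Quat; ring.
Qed.

Lemma rexpIX I r s (j : nat) : I * I = -1 -> rexpI I r s ^+ j = rexpI I (r ^+ j) (j%:R * s).
Proof.
move=> hI; elim: j => [|j IHj].
  by rewrite expr0 mul0r /rexpI cos0 sin0 mulr1 mulr0 -[qreal 0]/(0 : quat R) mulr0 addr0.
by rewrite exprSr IHj rexpIM // -exprSr -natr1 mulrDl mul1r.
Qed.

Lemma qdot_rexpI I r s u c x z : I * I = -1 ->
  qdot (rexpI I r s * x) (rexpI I u c * z) =
  cos (s - c) * (r * u * qdot x z) + sin (s - c) * (r * u * qdot (I * x) z).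
Proof.
move=> hI; have split_rexpI a b y :
    rexpI I a b * y = qreal (a * cos b) * y + qreal (a * sin b) * (I * y).
  by rewrite /rexpI mulrDl -qrealC -mulrA.
rewrite !split_rexpI !qdotDl !qdotDr !qdotZl !qdotZr qdot_imag_skew // qdot_imag_isometry //.
by rewrite cosB sinB; ring.
Qed.

End QuaternionGeometry.

Section HardyNorm.
Context {R : realType}.
Notation mu := (@lebesgue_measure R).
Implicit Types (I : quat R) (b : nat -> quat R).

Lemma Rintegral_slice_sqnorm I N b r : I * I = -1 ->
  \int[mu]_(t in `[0, 2 * pi]) (qnorm (\sum_(j < N) rexpI I r t ^+ j * b j) ^+ 2) =
  2 * pi * \sum_(j < N) r ^+ (2 * j) * qdot (b j) (b j).
Proof.
move=> hI.
pose A (j k : 'I_N) := r ^+ j * r ^+ k * qdot (b j) (b k).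
pose B (j k : 'I_N) := r ^+ j * r ^+ k * qdot (I * b j) (b k).
have integrand t : qnorm (\sum_(j < N) rexpI I r t ^+ j * b j) ^+ 2 =
    \sum_(j < N) \sum_(k < N)
      (cos ((j%:Z - k%:Z)%:~R * t) * A j k + sin ((j%:Z - k%:Z)%:~R * t) * B j k).
  rewrite qnorm_sqr qdot_sum; apply: eq_bigr => j _; apply: eq_bigr => k _.
  by rewrite !rexpIX // qdot_rexpI // intrB mulrBl.
under eq_Rintegral do rewrite integrand.
rewrite Rintegral_sum => [|j]; last by apply: continuous_sum => k; exact: continuous_trig.
rewrite big_distrr /=; apply: eq_bigr => j _.
rewrite Rintegral_sum => [|k]; last exact: continuous_trig.
under eq_bigr do rewrite Rintegral_trig subr_eq0 eqz_nat.
rewrite (bigD1 j) //= big1 => [|k kj]; last by rewrite val_eqE eq_sym (negbTE kj) !mul0r.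
by rewrite eqxx mul1r addr0 mulrC /A -exprD addnn -mul2n.
Qed.

Lemma H2_slice_poly I N b : I * I = -1 ->
  H2_slice (fun q => \sum_(j < N) q ^+ j * b j) I =
  Num.sqrt (2 * pi * \sum_(j < N) qdot (b j) (b j)).
Proof.
move=> hI; pose g r := Num.sqrt (2 * pi * \sum_(j < N) r ^+ (2 * j) * qdot (b j) (b j)).
have g_cont : continuous g.
  move=> r; apply: continuous_comp; last exact: sqrt_continuous.
  apply: continuousM_fun; first exact: cst_continuous.
  apply: continuous_sum => j; apply: continuousM_fun; last exact: cst_continuous.
  exact: exprn_continuous.
rewrite /H2_slice (_ : (fun r => _) = g); last first.
  by apply/funext => r; rewrite Rintegral_slice_sqnorm.
apply: cvg_lim => //; have := cvg_at_left_filter (g_cont 1).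
by rewrite /g; under eq_bigr do rewrite expr1n mul1r.
Qed.

Lemma H2norm_poly N b :
  H2norm (fun q => \sum_(j < N) q ^+ j * b j) = Num.sqrt (2 * pi * \sum_(j < N) qdot (b j) (b j)).
Proof.
have i_unit : Quat 0 1 0 0 * Quat 0 1 0 0 = -1 :> quat R.
  by rewrite qmulE /qmul /= -[-1]/(Quat (-1) (-0) (-0) (-0)); congr Quat; ring.
rewrite /H2norm (_ : [set _ | _] = [set Num.sqrt (2 * pi * \sum_(j < N) qdot (b j) (b j))])
  ?sup1 //.
apply/seteqP; split => x /=; first by case=> I /H2_slice_poly -> ->.
by move=> ->; exists (Quat 0 1 0 0) => //; rewrite H2_slice_poly.
Qed.

Lemma slice_poly_eq0_coef N b : (forall q, \sum_(j < N) q ^+ j * b j = 0) ->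
  forall j, (j < N)%N -> b j = 0.
Proof.
(* The zero function is also the empty slice polynomial, of Hardy norm 0. *)
move=> P0; have := H2norm_poly N b.
rewrite (_ : (fun q => _) = fun q => \sum_(j < 0) q ^+ j * b j); last first.
  by apply/funext => q; rewrite P0 big_ord0.
rewrite H2norm_poly big_ord0 mulr0 sqrtr0 => /esym/eqP.
rewrite sqrtr_eq0 pmulr_rle0 ?twopi_gt0 // => S_le0 j jN.
have S0 : \sum_(j < N) qdot (b j) (b j) = 0.
  by apply/eqP; rewrite eq_le S_le0 sumr_ge0 // => i _; exact: qdot_ge0.
have := psumr_eq0P (fun (i : 'I_N) _ => qdot_ge0 (b i)) S0 (i := Ordinal jN) isT.
by move=> /eqP; rewrite qdot_eq0 => /eqP.
Qed.

Lemma H2norm_spoly n (a : nat -> quat R) :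
  H2norm (spoly n a) = Num.sqrt (2 * pi * \sum_(j < n.+1) qdot (a j) (a j)).
Proof. exact: H2norm_poly. Qed.

Lemma H2norm_spoly_deriv n (a : nat -> quat R) :
  H2norm (spoly_deriv n a) = Num.sqrt (2 * pi * \sum_(j < n.+1) j%:R ^+ 2 * qdot (a j) (a j)).
Proof.
have -> : spoly_deriv n a = fun q => \sum_(j < n) q ^+ j * (j.+1%:R * a j.+1).
  by apply/funext => q; rewrite /spoly_deriv big_add1 big_mkord.
rewrite (H2norm_poly n (fun j => j.+1%:R * a j.+1)) big_ord_recl /= expr0n /= mul0r add0r.
by under eq_bigr do rewrite qreal_nat qdotZl qdotZr mulrA -expr2.
Qed.

Lemma spoly_monomialP n (a : nat -> quat R) :
  (exists c, forall q, spoly n a q = q ^+ n * c) <-> (forall j, (j < n)%N -> a j = 0).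
Proof.
split=> [[c Pc] | a0]; last first.
  exists (a n) => q; rewrite /spoly big_ord_recr /= big1 ?add0r // => j _.
  by rewrite a0 ?mulr0.
have coef0 := @slice_poly_eq0_coef n.+1 (fun j => a j - (j == n)%:R * c).
move=> j jn; have := coef0 _ j (ltnW jn); rewrite ltn_eqF // mul0r subr0; apply=> q.
under eq_bigr do rewrite mulrBr; rewrite sumrB.
rewrite [X in _ - X]big_ord_recr /= [X in _ - (X + _)]big1 => [|i _]; last first.
  by rewrite ltn_eqF ?mul0r ?mulr0.
by rewrite eqxx mul1r add0r -/(spoly n a q) Pc subrr.
Qed.

End HardyNorm.

Theorem theorem1p4 (R : realType) (n : nat) (a : nat -> quat R) (han : a n != 0) :
  H2norm (spoly_deriv n a) <= n%:R * H2norm (spoly n a) /\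
  (H2norm (spoly_deriv n a) = n%:R * H2norm (spoly n a) <->
   exists c : quat R, forall q : quat R, spoly n a q = q ^+ n * c).
Proof.
rewrite H2norm_spoly_deriv H2norm_spoly spoly_monomialP.
set T := \sum_(j < n.+1) _; set S := \sum_(j < n.+1) _.
have s_ge0 (j : 'I_n.+1) : 0 <= qdot (a j) (a j) := qdot_ge0 _.
have w_le (j : 'I_n.+1) : j%:R ^+ 2 <= n%:R ^+ 2 :> R by rewrite -!natrX ler_nat leq_exp2r // -ltnS.
have w_lt (j : nat) : (j%:R ^+ 2 < n%:R ^+ 2 :> R) = (j < n)%N by rewrite -!natrX ltr_nat ltn_exp2r.
have S_ge0 : 0 <= S by apply: sumr_ge0 => j _.
have -> : n%:R * Num.sqrt (2 * pi * S) = Num.sqrt (2 * pi * (n%:R ^+ 2 * S)).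
  by rewrite [2 * pi * (_ * _)]mulrCA [Num.sqrt (_ ^+ 2 * _)]sqrtrM ?sqr_ge0 // sqrtr_sqr ger0_norm.
have nS_ge0 : 0 <= 2 * pi * (n%:R ^+ 2 * S).
  by rewrite !mulr_ge0 ?sqr_ge0 ?pi_ge0.
have T_ge0 : 0 <= 2 * pi * T.
  by rewrite mulr_ge0 ?mulr_ge0 ?pi_ge0 ?sumr_ge0 // => j _; rewrite mulr_ge0 ?sqr_ge0.
have twopi_neq0 : 2 * pi != 0 :> R by rewrite lt0r_neq0 ?twopi_gt0.
split; first by rewrite ler_sqrt // ler_pM2l ?twopi_gt0 // ler_wsum_bound.
have sqrt_eqE : Num.sqrt (2 * pi * T) = Num.sqrt (2 * pi * (n%:R ^+ 2 * S)) <-> T = n%:R ^+ 2 * S.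
  by split=> [/eqP | -> //]; rewrite eqr_sqrt // => /eqP/(mulfI twopi_neq0).
apply: iff_trans sqrt_eqE _; apply: iff_trans (eq_wsum_boundP _ _ _ s_ge0 w_le) _.
split=> a0 j.
  by move=> jn; apply/eqP; rewrite -qdot_eq0; rewrite (a0 (Ordinal (leqW jn))) ?w_lt.
by rewrite w_lt => /a0 ->; apply/eqP; rewrite qdot_eq0.
Qed.
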